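(* Let $X$ be an $n$-dimensional non-singular tropical hypersurface in a (non-singular) tropical toric variety $Y$. For a face $\sigma$ of $X$ of dimension $q$ and sedentarity $\operatorname{sed}(\sigma)$, we have $\mathcal{N}_p(\sigma)=0$ whenever $p\le n-q-\operatorname{sed}(\sigma)$.
   Context: A non-singular tropical toric variety $Y$ of dimension $n+1$ is the tropical toric variety associated to a simplicial unimodular rational polyhedral fan $\Sigma$ in $\mathbb{R}^{n+1}$; it is the disjoint union of strata $Y_\rho\cong\mathbb{R}^{n+1-\dim\rho}$, $\rho\in\Sigma$. The sedentarity of a point is the codimension in $Y$ of the stratum containing it, and $\operatorname{sed}(\sigma)$ is that of the relative interior points of $\sigma$. For $\rho$ with primitive ray generators $r_1,\dots,r_s$, $T_{\mathbb Z}(Y_\rho)=\mathbb{Z}^{n+1}/\langle r_1,\dots,r_s\rangle$, with quotient maps $\pi_{\rho\eta}$ for $\rho\subset\eta$; $T_{\mathbb Z}(\sigma)$ is the integer tangent lattice of a rational polyhedron $\sigma$ inside $T_{\mathbb Z}(Y_\rho)$ where $\operatorname{relint}\sigma\subset Y_\rho$. A tropical hypersurface $X$ in $Y$ is the closure of a tropical hypersurface in $Y_0=\mathbb{R}^{n+1}$ defined by a tropical polynomial, with the polyhedral structure dual to the induced regular subdivision of its Newton polytope; $X$ is non-singular if each $X\cap Y_\rho$ is a tropical hypersurface in $Y_\rho$ dual to a primitive regular triangulation of its Newton polytope. For a face $\tau$ of $X$ with relative interior in $Y_\rho$: $\mathcal{F}^X_p(\tau)=\sum_\sigma\bigwedge^pT_{\mathbb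 Z}(\sigma)$ over faces $\sigma\supseteq\tau$ of $X$ with relative interior in $Y_\rho$, and $\mathcal{F}^Y_p|_X(\tau)=\bigwedge^pT_{\mathbb Z}(Y_\rho)$. $\mathcal{N}_p$ is the cokernel cosheaf on $X$ of the natural inclusion $\mathcal{F}^X_p\to\mathcal{F}^Y_p|_X$, i.e. $\mathcal{N}_p(\tau)=\bigwedge^pT_{\mathbb Z}(Y_\rho)/\mathcal{F}^X_p(\tau)$. *)

From HB Require Import structures.
From mathcomp Require Import all_boot all_order all_algebra.
From mathcomp Require Import finmap.
From mathcomp Require Import reals.

Set Implicit Arguments.
Unset Strict Implicit.
Unset Printing Implicit Defensive.

Import Order.TTheory GRing.Theory Num.Theory.
Local Open Scope ring_scope.


Section TropDefs.
Variables (R : realType) (N : nat).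

Definition ivec := {ffun 'I_N -> int}.
(* real points of R^N = Y_0 (also used as lifts of points of strata Y_rho) *)
Definition rvec := 'I_N -> R.

Definition idot (u v : ivec) : int := \sum_j u j * v j.

Definition zcomb (B : seq ivec) (c : nat -> int) : ivec :=
  [ffun j => \sum_(i < size B) c i * (nth [ffun=> 0] B i) j].

Definition in_Zspan (B : seq ivec) (v : ivec) : Prop :=
  exists c : nat -> int, v = zcomb B c.

Definition is_Zbasis (L : ivec -> Prop) (B : seq ivec) : Prop :=
  [/\ forall b, b \in B -> L b,
      forall v, L v -> in_Zspan B v &
      forall c : nat -> int, zcomb B c = [ffun=> 0] ->
        forall i, (i < size B)%N -> c i = 0].

Definition part_of_Zbasis (L : ivec -> Prop) (B : seq ivec) : Prop :=
  exists B' : seq ivec, is_Zbasis L (B ++ B').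

(* a simplicial cone is given by the finite set of its primitive ray generators *)
Definition cone_pts (rho : {fset ivec}) (x : rvec) : Prop :=
  exists lam : ivec -> R, (forall r, 0 <= lam r) /\
    x = (fun j => \sum_(r <- enum_fset rho) lam r * ((r j)%:~R)).

Definition unimodular_fan (Sig : {fset {fset ivec}}) : Prop :=
  [/\ fset0 \in Sig,
      forall rho tau, rho \in Sig -> (tau `<=` rho)%fset -> tau \in Sig,
      forall rho, rho \in Sig -> part_of_Zbasis (fun _ => True) (enum_fset rho) &
      forall rho eta, rho \in Sig -> eta \in Sig ->
        forall x, (cone_pts rho x /\ cone_pts eta x) <-> cone_pts (rho `&` eta)%fset x].

Record trop_poly := TropPoly {
  tp_k : nat;
  tp_e : 'I_tp_k -> ivec;
  tp_c : 'I_tp_k -> R }.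

Definition mono (g : trop_poly) (i : 'I_(tp_k g)) (x : rvec) : R :=
  tp_c i + \sum_j ((tp_e i j)%:~R * x j).
Arguments mono g i x : clear implicits.

Definition argmax (g : trop_poly) (x : rvec) : {set 'I_(tp_k g)} :=
  [set i | [forall j, mono g j x <= mono g i x]].

Definition trop_hyp (g : trop_poly) (x : rvec) : Prop := (1 < #|argmax g x|)%N.

Definition is_trop_poly (g : trop_poly) : Prop :=
  (0 < tp_k g)%N /\ injective (@tp_e g).

(* M_rho : the lattice of monomials on the stratum Y_rho (dual of T_Z(Y_rho)) *)
Definition M_lat (rho : {fset ivec}) (m : ivec) : Prop :=
  forall r, r \in rho -> idot m r = 0.

(* a tropical polynomial on Y_rho; points of Y_rho are represented by their
   lifts to R^N (the value of a monomial of M_rho does not depend on the lift) *)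
Definition trop_poly_on (rho : {fset ivec}) (g : trop_poly) : Prop :=
  is_trop_poly g /\ forall i : 'I_(tp_k g), M_lat rho (tp_e i).

(* the induced regular subdivision of the Newton polytope of g has cells
   conv{e_i : i in argmax g x}; it is a primitive triangulation iff every
   cell is a simplex whose edge vectors from a vertex are part of a basis of
   the lattice M_rho *)
Definition primitive_triangulation (rho : {fset ivec}) (g : trop_poly) : Prop :=
  forall x i0, i0 \in argmax g x ->
    part_of_Zbasis (M_lat rho)
      [seq [ffun j => tp_e i j - tp_e i0 j] | i <- enum (argmax g x :\ i0)].

(* the closure in Y of V(f) ⊂ Y_0, intersected with the stratum Y_rho, as a set
   of lifts x in R^N: x + d + sum_r t_r r lies in V(f) with |d| small and all
   t_r large (points of Y_rho are limits of x + sum_r t_r r, t_r -> +oo) *)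
Definition closure_in_stratum (f : trop_poly) (rho : {fset ivec}) (x : rvec) : Prop :=
  forall (eps M : R), 0 < eps ->
    exists (d : rvec) (t : ivec -> R),
      [/\ forall j, `|d j| < eps,
          forall r, r \in rho -> M < t r &
          trop_hyp f (fun j => x j + d j +
                        \sum_(r <- enum_fset rho) t r * ((r j)%:~R))].

(* face of V(g) dual to the cell with vertex set S (lifted to R^N) *)
Definition face (g : trop_poly) (S : {set 'I_(tp_k g)}) (x : rvec) : Prop :=
  S \subset argmax g x.
Arguments face g S x : clear implicits.

(* the face sets of V(g): duals of cells of positive dimension *)
Definition is_face (g : trop_poly) (P : rvec -> Prop) : Prop :=
  exists x0, (1 < #|argmax g x0|)%N /\ P = face g (argmax g x0).

Definition in_tangent (P : rvec -> Prop) (v : rvec) : Prop :=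
  exists (k : nat) (c : 'I_k -> R) (x y : 'I_k -> rvec),
    (forall i, P (x i) /\ P (y i)) /\
    v = (fun j => \sum_i c i * (x i j - y i j)).

Definition lin_indep (k : nat) (v : 'I_k -> rvec) : Prop :=
  forall c : 'I_k -> R, (forall j, \sum_i c i * v i j = 0) -> forall i, c i = 0.

Definition has_dim (P : rvec -> Prop) (d : nat) : Prop :=
  (exists v : 'I_d -> rvec, (forall i, in_tangent P (v i)) /\ lin_indep v) /\
  (forall v : 'I_d.+1 -> rvec, (forall i, in_tangent P (v i)) -> ~ lin_indep v).

Definition tangent_int (P : rvec -> Prop) (v : ivec) : Prop :=
  in_tangent P (fun j => (v j)%:~R).

End TropDefs.

(* an element of /\^p Z^N is given by its coordinates on the basis
   e_I = e_{i_1} /\ ... /\ e_{i_p}, I = {i_1 < ... < i_p} *)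
Definition wedge (n : nat) (p : nat) (vs : 'I_p -> ivec n.+1)
    (I : {set 'I_n.+1}) : int :=
  if #|I| == p then \det (\matrix_(i < p, j < p) vs i (nth ord0 (enum I) j))
  else 0.

Definition basis_wedge (n : nat) (I : {set 'I_n.+1}) (J : {set 'I_n.+1}) : int :=
  (J == I)%:Z.

Definition in_Zspan_ext (n : nat) (G : ({set 'I_n.+1} -> int) -> Prop)
    (w : {set 'I_n.+1} -> int) : Prop :=
  exists (k : nat) (c : 'I_k -> int) (ws : 'I_k -> ({set 'I_n.+1} -> int)),
    (forall i, G (ws i)) /\ forall J, w J = \sum_i c i * ws i J.

(* N_p(sigma) = 0 for a face sigma (lifted to R^N) of V(g) ⊂ Y_rho.
   /\^p T_Z(Y_rho) = /\^p (Z^N / L) = /\^p Z^N / (L /\ /\^{p-1} Z^N), where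
   L = <rays of rho>; the image of /\^p T_Z(sigma') is spanned by wedges of
   p vectors of the lifted lattice T_Z(sigma') ⊂ Z^N.  So N_p(sigma) = 0 iff
   every e_I is an integer combination of such wedges (sigma' ⊇ sigma a face
   of X in Y_rho) and of wedges having one factor in L. *)
Definition N_vanishes (R : realType) (n : nat) (rho : {fset ivec n.+1})
    (g : trop_poly R n.+1) (sigma : rvec R n.+1 -> Prop) (p : nat) : Prop :=
  forall I : {set 'I_n.+1}, #|I| = p ->
    in_Zspan_ext
      (fun w => exists vs : 'I_p -> ivec n.+1,
         w = wedge vs /\
         ((exists sigma', is_face g sigma' /\ (forall x, sigma x -> sigma' x) /\
              forall i, tangent_int sigma' (vs i))
          \/ (exists i, in_Zspan (enum_fset rho) (vs i))))
      (basis_wedge I).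

From HB Require Import structures.
From mathcomp Require Import all_boot all_order all_algebra.
From mathcomp Require Import finmap.
From mathcomp Require Import reals.
From mathcomp Require Import perm lra zify.
From Stdlib Require Import FunctionalExtensionality.

Set Implicit Arguments.
Unset Strict Implicit.
Unset Printing Implicit Defensive.

Import Order.TTheory GRing.Theory Num.Theory.
Local Open Scope ring_scope.

(* Write sigma as the face dual to the cell conv{e_i : i in S} of the primitive triangulation,
   with a vertex i0 and edge vectors E_a = e_i - e_i0 (a < k).  Primitivity and unimodularity give
   integer vectors w_b with <E_a, w_b> = delta_ab, and the tangent space of sigma contains the
   common orthogonal of the E_a, so k > n - q - sed(sigma) >= p.  Writing each e_j as
   sum_b E_b(j) w_b plus a vector orthogonal to all E_a and expanding e_I multilinearly, every
   resulting p-fold wedge misses some w_a, so all its factors are orthogonal to E_a; they then lie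
   in the tangent lattice of the face dual to the edge [e_i0, e_i] of the cell, a face containing
   sigma. *)

Lemma sum_ord_delta (V : pzRingType) (n l : nat) (F : nat -> V) : (l < n)%N ->
  \sum_(i < n) F i * (i == l :> nat)%:R = F l.
Proof.
move=> hl; rewrite (bigD1 (Ordinal hl)) //= eqxx mulr1 big1 ?addr0 // => i hi.
by rewrite (_ : (i == l :> nat) = false) ?mulr0 //; apply: contraNF hi => /eqP e; apply/eqP/val_inj.
Qed.

Section Lattice.
Variable N : nat.
Local Notation zvec := ([ffun=> 0] : ivec N).

Definition evec (j : 'I_N) : ivec N := [ffun j' => (j == j')%:Z].

Lemma idot_evec (m : ivec N) j : idot m (evec j) = m j.
Proof.
rewrite /idot (bigD1 j) //= ffunE eqxx mulr1 big1 ?addr0 // => i hi.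
by rewrite ffunE eq_sym (negbTE hi) mulr0.
Qed.

Lemma idot_zcomb (m : ivec N) B c :
  idot m (zcomb B c) = \sum_(i < size B) c i * idot m (nth zvec B i).
Proof.
rewrite /idot; under eq_bigr => j _ do rewrite ffunE mulr_sumr.
rewrite exchange_big; apply: eq_bigr => i _; rewrite mulr_sumr.
by apply: eq_bigr => j _; rewrite mulrCA.
Qed.

Lemma zcomb_nth (B : seq (ivec N)) l : (l < size B)%N ->
  zcomb B (fun i => (i == l)%:Z) = nth zvec B l.
Proof.
move=> hl; apply/ffunP => j; rewrite ffunE -[RHS](sum_ord_delta (fun i => nth zvec B i j) hl).
by apply: eq_bigr => i _; rewrite mulrC natz.
Qed.

Lemma zcomb_inj L (B : seq (ivec N)) c c' : is_Zbasis L B -> zcomb B c = zcomb B c' ->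
  forall i, (i < size B)%N -> c i = c' i.
Proof.
case=> _ _ hfree e i hi; apply/eqP; rewrite -subr_eq0; apply/eqP.
apply: (hfree (fun i => c i - c' i)) => //; apply/ffunP => j.
move/ffunP: e => /(_ j); rewrite !ffunE => e.
under eq_bigr => l _ do rewrite mulrBl.
by rewrite sumrB e subrr.
Qed.

Lemma Zbasis_coord B : is_Zbasis (fun _ => True) B ->
  exists y : nat -> ivec N, forall x, x = zcomb B (fun i => idot (y i) x).
Proof.
case=> _ hspan _.
have /fin_all_exists [c hc] : forall j, exists c, evec j = zcomb B c by move=> j; apply: hspan.
exists (fun i => [ffun j => c j i]) => x; apply/ffunP => j'.
rewrite ffunE -[LHS](idot_evec x) /idot.
under [RHS]eq_bigr => i _ do rewrite mulr_suml.
rewrite exchange_big /=; apply: eq_bigr => j _.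
have -> : evec j' j = evec j j' by rewrite /evec !ffunE eq_sym.
rewrite hc ffunE mulr_sumr.
by apply: eq_bigr => i _; rewrite ffunE mulrCA mulrA.
Qed.

Section DualCoordinates.
Variables (B : seq (ivec N)) (y : nat -> ivec N).
Hypothesis hB : is_Zbasis (fun _ => True) B.
Hypothesis hy : forall x, x = zcomb B (fun i => idot (y i) x).

Lemma idot_coord_nth i l : (i < size B)%N -> (l < size B)%N ->
  idot (y i) (nth zvec B l) = (i == l)%:Z.
Proof.
move=> hi hl.
by have := zcomb_inj hB (etrans (esym (hy (nth zvec B l))) (esym (zcomb_nth hl))); apply.
Qed.

(* The transposed reconstruction formula: sum_i B_i (y_i)^T = Id forces sum_i y_i (B_i)^T = Id. *)
Lemma coord_expand (m : ivec N) j :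
  m j = \sum_(i < size B) idot m (nth zvec B i) * y i j.
Proof.
rewrite -idot_evec {1}(hy (evec j)) idot_zcomb.
by apply: eq_bigr => i _; rewrite idot_evec mulrC.
Qed.

End DualCoordinates.

Definition is_dual (E : seq (ivec N)) (w : nat -> ivec N) : Prop :=
  forall a b, (a < size E)%N -> (b < size E)%N -> idot (nth zvec E a) (w b) = (a == b)%:Z.

Lemma is_dual_prefix E E' w : is_dual (E ++ E') w -> is_dual E w.
Proof.
move=> hw a b ha hb; have := hw a b; rewrite nth_cat ha size_cat => ->//; exact: ltn_addr.
Qed.

(* Coordinates in the basis of Z^N extending the rays of rho pair to zero with the rays, so the
   dual coordinate vectors beyond the rays span M_rho; pairing with them extends the coordinate
   functionals of a basis of M_rho to Z^N. *)
Lemma M_lat_Zbasis_dual (rho : {fset (ivec N)}) (B F : seq (ivec N)) :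
  is_Zbasis (fun _ => True) (enum_fset rho ++ B) ->
  is_Zbasis (M_lat rho) F -> exists w : nat -> ivec N, is_dual F w.
Proof.
set BZ := enum_fset rho ++ B; set r := size (enum_fset rho) => hZ hF.
have [hFmem hFspan _] := hF.
have [y hy] := Zbasis_coord hZ.
have BZ_ray l : (l < r)%N -> nth zvec BZ l \in rho by move=> hl; rewrite /BZ nth_cat hl mem_nth.
have yM i : (r <= i < size BZ)%N -> M_lat rho (y i).
  move=> /andP [hri hi] u hu.
  have hl : (index u (enum_fset rho) < r)%N by rewrite index_mem.
  have -> : u = nth zvec BZ (index u (enum_fset rho)) by rewrite /BZ nth_cat hl nth_index.
  rewrite (idot_coord_nth hZ hy) //; last by rewrite (leq_trans hl) // size_cat leq_addr.
  by case: eqP => // e; move: hri; rewrite e leqNgt hl.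
have /fin_all_exists [cf hcf] :
    forall i : 'I_(size BZ), exists c, (r <= i)%N -> y i = zcomb F c.
  move=> i; case: (leqP r i) => hri; last by exists (fun _ => 0).
  have [|c hc] := hFspan (y i) (yM i _); first by rewrite hri ltn_ord.
  by exists c.
exists (fun b => [ffun j => \sum_(i < size BZ) cf i b * nth zvec BZ i j]) => a b ha hb.
have hFa : M_lat rho (nth zvec F a) by apply: hFmem; exact: mem_nth.
have expand : zcomb F (fun c => \sum_(i < size BZ) idot (nth zvec F a) (nth zvec BZ i) * cf i c)
    = zcomb F (fun c => (c == a)%:Z).
  rewrite zcomb_nth //; apply/ffunP => j; rewrite ffunE [RHS](coord_expand hy).
  under eq_bigr => c _ do rewrite big_distrl /=.
  rewrite exchange_big /=; apply: eq_bigr => i _.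
  case: (leqP r i) => hri.
    by rewrite (hcf i hri) ffunE mulr_sumr; apply: eq_bigr => c _; rewrite mulrA.
  by rewrite hFa ?BZ_ray // mul0r big1 // => c _; rewrite !mul0r.
rewrite eq_sym -(zcomb_inj hF expand hb) /idot.
under eq_bigr => j _ do rewrite ffunE mulr_sumr.
rewrite exchange_big; apply: eq_bigr => i _ /=; rewrite mulr_suml.
by apply: eq_bigr => j _; rewrite mulrCA mulrC.
Qed.

Definition dual_residual (E : seq (ivec N)) (w : nat -> ivec N) (j : 'I_N) : ivec N :=
  [ffun j' => (j == j')%:Z - \sum_(b < size E) nth zvec E b j * w b j'].

Lemma idot_dual_residual E w j a : is_dual E w -> (a < size E)%N ->
  idot (nth zvec E a) (dual_residual E w j) = 0.
Proof.
move=> hw ha; rewrite /idot.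
under eq_bigr => j' _ do rewrite ffunE mulrBr mulr_sumr.
rewrite sumrB exchange_big /= (bigD1 j) //= eqxx mulr1 big1 ?addr0 => [|j' hj']; last first.
  by rewrite eq_sym (negbTE hj') mulr0.
have -> : \sum_(b < size E) \sum_i nth zvec E a i * (nth zvec E b j * w b i) =
    \sum_(b < size E) nth zvec E b j * (b == a :> nat)%:R.
  apply: eq_bigr => b _; rewrite natz eq_sym -hw ?ltn_ord // /idot mulr_sumr.
  by apply: eq_bigr => i _; rewrite mulrCA.
by rewrite (sum_ord_delta (fun b => nth zvec E b j) ha) subrr.
Qed.

End Lattice.

Lemma in_Zspan_ext_sum n (G : ({set 'I_n.+1} -> int) -> Prop) (T : finType)
    (c : T -> int) (ws : T -> {set 'I_n.+1} -> int) (w : {set 'I_n.+1} -> int) :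
  (forall x, G (ws x)) -> (forall J, w J = \sum_x c x * ws x J) -> in_Zspan_ext G w.
Proof.
move=> hG hw; exists #|T|, (fun i => c (enum_val i)), (fun i => ws (enum_val i)).
split=> // J; rewrite hw -(big_enum_val (A := T) (fun x => c x * ws x J)).
by apply: eq_bigl => x; rewrite inE.
Qed.

Lemma wedge_multilinear n p (K : finType) (A : 'I_p -> K -> int) (W : K -> ivec n.+1)
    (vs : 'I_p -> ivec n.+1) :
  (forall t j, vs t j = \sum_u A t u * W u j) ->
  wedge vs =1 fun J =>
    \sum_(f : {ffun 'I_p -> K}) (\prod_t A t (f t)) * wedge (fun t => W (f t)) J.
Proof.
move=> hvs J; rewrite /wedge; case: eqP => _; last by rewrite big1 // => f _; rewrite mulr0.
rewrite /determinant.
transitivity (\sum_(s : 'S_p) \sum_(f : {ffun 'I_p -> K}) (-1) ^+ s *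
   ((\prod_t A t (f t)) * \prod_t W (f t) (nth ord0 (enum J) (s t)))).
  apply: eq_bigr => s _; rewrite -mulr_sumr; congr (_ * _).
  under eq_bigr => t _ do rewrite mxE hvs.
  by rewrite bigA_distr_bigA; apply: eq_bigr => f _; rewrite big_split.
rewrite exchange_big; apply: eq_bigr => f _; rewrite mulr_sumr.
apply: eq_bigr => s _; rewrite mulrCA; congr (_ * (_ * _)).
by apply: eq_bigr => t _; rewrite mxE.
Qed.

Lemma basis_wedge_evec n p (I : {set 'I_n.+1}) : #|I| = p ->
  basis_wedge I =1 wedge (fun t : 'I_p => evec (nth ord0 (enum I) t)).
Proof.
move=> hI J; rewrite /wedge /basis_wedge.
have [hJ | hJ] := eqVneq #|J| p; last first.
  by case: eqP => // eJ; move: hJ; rewrite eJ hI eqxx.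
have szI : size (enum I) = p by rewrite -cardE.
have [-> | hne] := eqVneq J I.
  rewrite (_ : \matrix_(i, j) _ = 1%:M) ?det1 //.
  apply/matrixP => t s; rewrite !mxE ffunE nth_uniq ?enum_uniq ?szI //.
  by rewrite -[t == s]/(val t == val s); case: (val t == val s).
have /subsetPn [x xI xJ] : ~~ (I \subset J).
  by move: hne; apply: contraNN => sIJ; rewrite eq_sym eqEcard sIJ hI hJ leqnn.
have ht : (index x (enum I) < p)%N by rewrite -szI index_mem mem_enum.
rewrite (expand_det_row _ (Ordinal ht)) big1 // => s _.
rewrite !mxE ffunE /= nth_index ?mem_enum //.
case: eqP => [hxs | _]; last by rewrite mul0r.
by case/negP: xJ; rewrite hxs -mem_enum mem_nth // -cardE hJ.
Qed.

Lemma exists_unused_inl (p k : nat) (T : finType) (F : 'I_p -> 'I_k + T) :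
  (p < k)%N -> exists a : 'I_k, forall t, F t != inl a.
Proof.
move=> hpk; have [a /forallP ha | hall] := pickP (fun a : 'I_k => [forall t, F t != inl a]).
  by exists a.
have sub : [set inl a | a : 'I_k] \subset [set F t | t : 'I_p].
  apply/subsetP => _ /imsetP [a _ ->]; move/negbT: (hall a).
  by rewrite negb_forall => /existsP [t /negPn /eqP <-]; exact: imset_f.
have := leq_trans (subset_leq_card sub) (leq_imset_card _ _).
rewrite card_imset; last exact: inl_inj.
by rewrite !card_ord leqNgt hpk.
Qed.

(* Split e_j = sum_b E_b(j) w_b + r_j with r_j orthogonal to every E_a; a p-fold wedge of these
   vectors omits some w_a since p < k, and then all its factors are orthogonal to E_a. *)
Lemma basis_wedge_span_orthogonal n p (E : seq (ivec n.+1)) (w : nat -> ivec n.+1)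
    (G : ({set 'I_n.+1} -> int) -> Prop) (I : {set 'I_n.+1}) :
  is_dual E w -> (p < size E)%N -> #|I| = p ->
  (forall (vs : 'I_p -> ivec n.+1) a, (a < size E)%N ->
     (forall t, idot (nth [ffun=> 0] E a) (vs t) = 0) -> G (wedge vs)) ->
  in_Zspan_ext G (basis_wedge I).
Proof.
move=> hw hpk hI hG.
pose It (t : 'I_p) := nth ord0 (enum I) t.
pose W (u : 'I_(size E) + 'I_n.+1) : ivec n.+1 :=
  match u with inl b => w b | inr j => dual_residual E w j end.
pose A (t : 'I_p) (u : 'I_(size E) + 'I_n.+1) : int :=
  match u with inl b => nth [ffun=> 0] E b (It t) | inr j => (It t == j)%:Z end.
have evec_split t j' : evec (It t) j' = \sum_u A t u * W u j'.
  rewrite big_sumType /=; set rest := \sum_(j : 'I_n.+1) _.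
  have -> : rest = dual_residual E w (It t) j'.
    rewrite /rest (bigD1 (It t)) //= eqxx mul1r big1 ?addr0 // => j hj.
    by rewrite eq_sym (negbTE hj) mul0r.
  by rewrite !ffunE addrC subrK.
have W_orth (a : 'I_(size E)) u : u != inl a -> idot (nth [ffun=> 0] E a) (W u) = 0.
  case: u => [b|j] /= hu; last exact: idot_dual_residual.
  rewrite hw //; case: eqP => // /val_inj eab.
  by rewrite eab eqxx in hu.
apply: (@in_Zspan_ext_sum _ _ _ (fun f : {ffun 'I_p -> _} => \prod_t A t (f t))
                                (fun f => wedge (fun t => W (f t)))).
  move=> f; have [a ha] := exists_unused_inl f hpk.
  by apply: (hG _ a) => // t; apply: W_orth.
by move=> J; rewrite (basis_wedge_evec hI); apply: wedge_multilinear => t; apply: evec_split.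
Qed.

Lemma exists_pos_scale_lt (R : realFieldType) (I : finType) (P : pred I) (a b : I -> R) :
  (forall i, P i -> 0 < b i) -> exists2 e : R, 0 < e & forall i, P i -> e * a i < b i.
Proof.
move=> hb; set S := \sum_(i | P i) `|a i| / b i.
have S0 : 0 <= S by apply: sumr_ge0 => i hi; rewrite divr_ge0 // ltW // hb.
exists (1 + S)^-1; first by rewrite invr_gt0; lra.
move=> i hi; have bi := hb i hi.
have hle : `|a i| <= S * b i.
  rewrite -ler_pdivrMr // /S (bigD1 i) //= lerDl.
  by apply: sumr_ge0 => j /andP [hj _]; rewrite divr_ge0 // ltW // hb.
apply: (le_lt_trans (y := (1 + S)^-1 * `|a i|)).
  by rewrite ler_pM2l ?invr_gt0 ?real_ler_norm ?num_real //; lra.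
by rewrite mulrC ltr_pdivrMr; nra.
Qed.

Section ArgmaxPerturbation.
Variables (R : realType) (N : nat) (g : trop_poly R N).

Definition rdot (u : ivec N) (v : rvec R N) : R := \sum_j (u j)%:~R * v j.

Lemma rdotB (u u' : ivec N) v : rdot [ffun j => u j - u' j] v = rdot u v - rdot u' v.
Proof. by rewrite /rdot -sumrB; apply: eq_bigr => j _; rewrite ffunE intrB mulrBl. Qed.

Lemma rdot_int (u v : ivec N) : rdot u (fun j => (v j)%:~R) = (idot u v)%:~R.
Proof. by rewrite /rdot /idot rmorph_sum; apply: eq_bigr => j _; rewrite rmorphM. Qed.

Lemma mono_translate (i : 'I_(tp_k g)) (x d : rvec R N) (e : R) :
  mono i (fun j => x j + e * d j) = mono i x + e * rdot (tp_e i) d.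
Proof.
rewrite /mono /rdot -addrA; congr (_ + _).
by rewrite mulr_sumr -big_split; apply: eq_bigr => j _ /=; lra.
Qed.

Lemma argmax_mono_eq (x : rvec R N) i j :
  i \in argmax g x -> j \in argmax g x -> mono j x = mono i x.
Proof. by rewrite !inE => /forallP hi /forallP hj; apply/eqP; rewrite eq_le hi hj. Qed.

Lemma argmax_perturb (x d : rvec R N) i1 : i1 \in argmax g x ->
  exists2 e : R, 0 < e & forall i,
    (i \in argmax g (fun j => x j + e * d j)) =
    (i \in argmax g x) && [forall j in argmax g x, rdot (tp_e j) d <= rdot (tp_e i) d].
Proof.
move=> hi1.
have [|e e0 he] := @exists_pos_scale_lt _ _
    [pred ij : 'I_(tp_k g) * 'I_(tp_k g) | (ij.1 \in argmax g x) && (ij.2 \notin argmax g x)]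
    (fun ij => rdot (tp_e ij.2) d - rdot (tp_e ij.1) d) (fun ij => mono ij.1 x - mono ij.2 x).
  move=> [i j] /andP [/= hi]; rewrite inE negb_forall => /existsP [l]; rewrite -ltNge subr_gt0.
  by move/lt_le_trans; apply; move: hi; rewrite inE => /forallP.
exists e => // i; rewrite inE; apply/forallP/andP => [H | [hi /forall_inP hD] j].
  have hi : i \in argmax g x.
    apply/negPn/negP => hni; have := he (i1, i); rewrite /= hi1 hni => /(_ isT).
    by have := H i1; rewrite !mono_translate; lra.
  split=> //; apply/forall_inP => j hj.
  by have := H j; rewrite !mono_translate (argmax_mono_eq hi hj) lerD2l ler_pM2l.
rewrite !mono_translate; case hj : (j \in argmax g x).
  by rewrite (argmax_mono_eq hi hj) lerD2l ler_pM2l // hD.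
by have := he (i, j); rewrite /= hi hj => /(_ isT); lra.
Qed.

Lemma in_tangent_face (x v : rvec R N) i1 : i1 \in argmax g x ->
  {in argmax g x &, forall i i', rdot (tp_e i) v = rdot (tp_e i') v} ->
  in_tangent (face (argmax g x)) v.
Proof.
move=> hi1 hv; have [e e0 he] := argmax_perturb v hi1.
exists 1%N, (fun _ => e^-1), (fun _ j => x j + e * v j), (fun _ => x); split.
  move=> _; split; last exact: subxx.
  by apply/subsetP => i hi; rewrite he hi; apply/forall_inP => j hj; rewrite (hv j i).
apply: functional_extensionality => j; rewrite big_ord1 addrC addKr mulrA mulVf ?mul1r //; lra.
Qed.

Lemma face_of_edge (x0 d : rvec R N) i0 i1 :
  i0 \in argmax g x0 -> i1 \in argmax g x0 -> i1 != i0 ->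
  rdot (tp_e i1) d = rdot (tp_e i0) d ->
  (forall i, i \in argmax g x0 -> i != i0 -> i != i1 -> rdot (tp_e i) d < rdot (tp_e i0) d) ->
  exists sigma', [/\ is_face g sigma', forall x, face (argmax g x0) x -> sigma' x &
    forall v, rdot (tp_e i1) v = rdot (tp_e i0) v -> in_tangent sigma' v].
Proof.
move=> h0 h1 h10 heq hlt.
have hle i : i \in argmax g x0 -> rdot (tp_e i) d <= rdot (tp_e i0) d.
  move=> hi; have [-> // | n0] := eqVneq i i0.
  by have [-> | n1] := eqVneq i i1; [rewrite heq | exact/ltW/hlt].
have [e e0 he] := argmax_perturb d h0; set y := fun j => _ in he.
have hy i : (i \in argmax g y) = (i \in argmax g x0) && (rdot (tp_e i0) d <= rdot (tp_e i) d).
  rewrite he; congr (_ && _); apply/forall_inP/idP => [H | h j hj]; first exact: H.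
  exact: le_trans (hle j hj) h.
have y0 : i0 \in argmax g y by rewrite hy h0 lexx.
have y1 : i1 \in argmax g y by rewrite hy h1 heq lexx.
have y_edge i : i \in argmax g y -> i = i0 \/ i = i1.
  rewrite hy => /andP [hi hd]; have [-> | n0] := eqVneq i i0; first by left.
  have [-> | n1] := eqVneq i i1; first by right.
  by have := hlt i hi n0 n1; rewrite ltNge hd.
exists (face (argmax g y)); split.
- by exists y; split=> //; apply/card_gt1P; exists i1, i0.
- by move=> x hx; apply: subset_trans hx; apply/subsetP => i; rewrite hy => /andP [].
- move=> v hv; apply: (in_tangent_face y0) => i i' /y_edge hi /y_edge hi'.
  by case: hi => ->; case: hi' => ->.
Qed.

End ArgmaxPerturbation.

Lemma has_dim_kernel_bound (R : realType) (N k d : nat) (M : 'M[R]_(k, N))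
    (P : rvec R N -> Prop) :
  has_dim P d ->
  (forall v : rvec R N, (forall a, \sum_j M a j * v j = 0) -> in_tangent P v) ->
  (N <= d + k)%N.
Proof.
move=> [_ hd] hT; rewrite leqNgt; apply/negP => hlt.
set K := kermx M^T.
have hrk : (d.+1 <= \rank K)%N.
  by rewrite /K mxrank_ker mxrank_tr; have := rank_leq_row M; lia.
set B := row_base K.
pose iB (i : 'I_d.+1) := widen_ord hrk i.
apply: (hd (fun i j => B (iB i) j)) => [i | c hc i].
  apply: hT => a.
  have /sub_kermxP/matrixP/(_ 0 a) : (row (iB i) B <= K)%MS.
    by rewrite (submx_trans (row_sub _ _)) // eq_row_base.
  rewrite [LHS]mxE [RHS]mxE => h; rewrite -[RHS]h; apply: eq_bigr => j _.
  by rewrite [M^T _ _]mxE [row _ _ _ _]mxE mulrC.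
pose cr : 'rV[R]_(\rank K) := \row_r \sum_i (iB i == r)%:R * c i.
have cr0 : cr = 0.
  apply: (row_free_inj (row_base_free K)); rewrite mul0mx.
  apply/matrixP => z j; rewrite [RHS]mxE -[RHS](hc j) [LHS]mxE.
  under eq_bigr => r _ do rewrite [cr _ _]mxE mulr_suml.
  rewrite exchange_big /=; apply: eq_bigr => i' _.
  rewrite (bigD1 (iB i')) //= eqxx mul1r big1 ?addr0 // => r hr.
  by rewrite eq_sym (negbTE hr) !mul0r.
move/matrixP: cr0 => /(_ 0 (iB i)); rewrite [LHS]mxE [RHS]mxE => h; rewrite -[RHS]h.
rewrite (bigD1 i) //= eqxx mul1r big1 ?addr0 // => i' hi'.
by rewrite (_ : (iB i' == iB i) = false) ?mul0r //; apply: contraNF hi' => /eqP [] /val_inj ->.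
Qed.

Section Cell.
Variables (R : realType) (N : nat) (g : trop_poly R N) (x0 : rvec R N) (i0 : 'I_(tp_k g)).
Hypothesis hi0 : i0 \in argmax g x0.
Local Notation S := (argmax g x0).
Local Notation zvec := ([ffun=> 0] : ivec N).

Definition cell_edges : seq (ivec N) :=
  [seq [ffun j => tp_e i j - tp_e i0 j] | i <- enum (S :\ i0)].

Definition cell_vertex (c : nat) : 'I_(tp_k g) := nth i0 (enum (S :\ i0)) c.

Local Notation E := cell_edges.

Lemma size_cell_edges : size E = size (enum (S :\ i0)).
Proof. exact: size_map. Qed.

Lemma cell_vertex_mem c : (c < size E)%N -> cell_vertex c \in S :\ i0.
Proof. by rewrite size_cell_edges => hc; rewrite -mem_enum mem_nth. Qed.

Lemma cell_vertexP i : i \in S -> i = i0 \/ exists2 c, (c < size E)%N & i = cell_vertex c.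
Proof.
move=> hi; have [-> | hne] := eqVneq i i0; [by left | right].
have hiL : i \in enum (S :\ i0) by rewrite mem_enum in_setD1 hne.
by exists (index i (enum (S :\ i0))); rewrite ?size_cell_edges ?index_mem // /cell_vertex nth_index.
Qed.

Lemma rdot_cell_vertex c (v : rvec R N) : (c < size E)%N ->
  rdot (tp_e (cell_vertex c)) v = rdot (tp_e i0) v + rdot (nth zvec E c) v.
Proof.
by rewrite size_cell_edges => hc; rewrite (nth_map i0) // rdotB addrC subrK.
Qed.

Lemma cell_dim_bound d : has_dim (face S) d -> (N <= d + size E)%N.
Proof.
move=> hdim; apply: (has_dim_kernel_bound (M := \matrix_(a, j) (nth zvec E a j)%:~R) hdim).
move=> v hv; have hS i : i \in S -> rdot (tp_e i) v = rdot (tp_e i0) v.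
  case/cell_vertexP => [-> // | [c hc ->]]; rewrite rdot_cell_vertex // -[RHS]addr0.
  by congr (_ + _); rewrite -(hv (Ordinal hc)); apply: eq_bigr => j _; rewrite mxE.
by apply: (in_tangent_face hi0) => i i' hi hi'; rewrite !hS.
Qed.

(* The direction d = w_a - sum_b w_b is orthogonal to E_a and has slope -1 along every other
   edge, so it singles out the edge [i0, cell_vertex a]. *)
Lemma cell_edge_face w a : is_dual E w -> (a < size E)%N ->
  exists sigma', [/\ is_face g sigma', forall x, face S x -> sigma' x &
    forall v : ivec N, idot (nth zvec E a) v = 0 -> tangent_int sigma' v].
Proof.
move=> hw ha.
pose d : rvec R N := fun j => (w a j)%:~R - \sum_(b < size E) (w b j)%:~R.
have hd c : (c < size E)%N -> rdot (nth zvec E c) d = (c == a)%:R - 1.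
  move=> hc; have pair b : (b < size E)%N ->
      \sum_j (nth zvec E c j)%:~R * (w b j)%:~R = (c == b)%:R :> R.
    by move=> hb; rewrite -[LHS]/(rdot _ (fun j => (w b j)%:~R)) rdot_int hw // -pmulrn.
  rewrite /rdot; under eq_bigr => j _ do rewrite mulrBr mulr_sumr.
  rewrite sumrB exchange_big /= pair //; congr (_ - _).
  under eq_bigr => b _ do rewrite pair ?ltn_ord // eq_sym -[_%:R]mul1r.
  exact: (sum_ord_delta (fun _ => 1)).
have := cell_vertex_mem ha; rewrite in_setD1 => /andP [va_i0 va_S].
have [||sigma' [face' sub' tan']] := @face_of_edge _ _ g x0 d i0 (cell_vertex a) hi0 va_S va_i0.
- by rewrite rdot_cell_vertex // hd // eqxx subrr addr0.
- move=> i /cell_vertexP [-> | [c hc ->]]; first by rewrite eqxx.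
  move=> _ hca; rewrite rdot_cell_vertex // hd //.
  have /negbTE -> : c != a by apply: contraNneq hca => ->.
  by rewrite sub0r gtrDl oppr_lt0.
exists sigma'; split=> // v hv; apply: tan'.
by rewrite rdot_cell_vertex // [rdot (nth _ _ _) _]rdot_int hv mulr0z addr0.
Qed.

End Cell.

Theorem lemma3p7 (R : realType) (n : nat)
    (Sig : {fset {fset ivec n.+1}}) (f : trop_poly R n.+1) :
  unimodular_fan R Sig ->
  is_trop_poly f ->
  (* X is non-singular *)
  (forall rho, rho \in Sig ->
     exists g : trop_poly R n.+1,
       [/\ trop_poly_on rho g,
           forall x, trop_hyp g x <-> closure_in_stratum f rho x &
           primitive_triangulation rho g]) ->
  forall rho, rho \in Sig ->
  forall g : trop_poly R n.+1,
    trop_poly_on rho g ->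
    (forall x, trop_hyp g x <-> closure_in_stratum f rho x) ->
    primitive_triangulation rho g ->
  forall sigma : rvec R n.+1 -> Prop, is_face g sigma ->
  forall q : nat, has_dim sigma (q + #|` rho|) ->
  forall p : nat, (p + q + #|` rho| <= n)%N ->
    N_vanishes rho g sigma p.
Proof.
move=> [_ _ hrays _] _ _ rho hrho g _ _ hprim sigma [x0 [hS ->]] q hdim p hp I hI.
have [i0 hi0] : exists i0, i0 \in argmax g x0 by apply/set0Pn; rewrite -card_gt0 ltnW.
have [B hB] := hrays rho hrho.
have [B' hB'] := hprim x0 i0 hi0.
have [w /is_dual_prefix hw] := M_lat_Zbasis_dual hB hB'.
have hk : (p < size (cell_edges x0 i0))%N by have := cell_dim_bound hi0 hdim; lia.
apply: (basis_wedge_span_orthogonal hw hk hI) => vs a ha hvs.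
have [sigma' [hface hsub htan]] := cell_edge_face hi0 hw ha.
by exists vs; split=> //; left; exists sigma'; split=> //; split=> // t; apply: htan.
Qed.
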